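(* A ring $R$ is CSNC if and only if (1) $2\in\mathrm{Nil}(R)$, and (2) for every clean element $a\in R$ there exists an integer $k\ge 0$ such that $a^{2^k}$ is strongly nil-clean.
   Context: All rings are associative with identity $1$. For a ring $R$, $\mathrm{Id}(R)$, $U(R)$, $\mathrm{Nil}(R)$ denote the sets of idempotents, units and nilpotent elements. An element $a\in R$ is clean if $a=e+u$ for some $e\in\mathrm{Id}(R)$, $u\in U(R)$. An element $a$ is strongly nil-clean if $a=e+q$ with $e\in \mathrm{Id}(R)$, $q\in\mathrm{Nil}(R)$ and $eq=qe$. A ring $R$ is called CSNC if every clean element of $R$ is strongly nil-clean. *)

From mathcomp Require Import all_boot all_algebra.
Set Implicit Arguments. Unset Strict Implicit. Unset Printing Implicit Defensive.
Import GRing.Theory.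
Local Open Scope ring_scope.

Definition is_idempotent (R : unitRingType) (e : R) : Prop := e * e = e.
Definition is_nilpotent (R : unitRingType) (q : R) : Prop :=
  exists n : nat, q ^+ n = 0.
Definition is_clean (R : unitRingType) (a : R) : Prop :=
  exists e u : R, [/\ is_idempotent e, u \is a GRing.unit & a = e + u].
Definition is_strongly_nil_clean (R : unitRingType) (a : R) : Prop :=
  exists e q : R, [/\ is_idempotent e, is_nilpotent q, e * q = q * e & a = e + q].
Definition CSNC (R : unitRingType) : Prop :=
  forall a : R, is_clean a -> is_strongly_nil_clean a.

(* A strongly nil-clean b has nilpotent defect b - b^2, so in a CSNC ring the
   clean element -1 makes -2 nilpotent.  Conversely, when 2 is nilpotent the
   identity  c^2 - c^4 = (c - c^2)^2 + 2 (c - c^2) c^2  shows that c - c^2 is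
   nilpotent as soon as c^2 - c^4 is, so a^(2^k) strongly nil-clean gives a
   nilpotent defect x = a - a^2.  The same identity places the defect of
   c_m = a^(2^m) in the ideal (x, 2)^m of Z[a]; as x and 2 are nilpotent this
   ideal vanishes for large m, so c_m is an idempotent and a - c_m, a multiple
   of x in Z[a], is a commuting nilpotent. *)
From mathcomp Require Import all_boot all_algebra.
From mathcomp Require Import zify.

Set Implicit Arguments.
Unset Strict Implicit.
Unset Printing Implicit Defensive.

Local Open Scope ring_scope.
Import GRing.Theory.

(* Proves [GRing.comm p q] for p, q ring expressions in one element, by
   decomposing q and then p. *)
Ltac commr_right :=
  repeat first [ exact: commr_refl | exact: commr_nat | exact: commr1
               | exact: commr0 | apply: commrB | apply: commrD | apply: commrM
               | apply: commrN | apply: commrX | apply: commr_sum => ? _ ].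

Ltac commr_poly := commr_right; try (apply: commr_sym; commr_right).

Section Nilpotent.
Variable R : unitRingType.
Implicit Types q r a b : R.

Lemma expr_eq0_le q n m : q ^+ n = 0 -> (n <= m)%N -> q ^+ m = 0.
Proof. by move=> qn0 /subnKC <-; rewrite exprD qn0 mul0r. Qed.

Lemma nilpotentMr_comm q r :
  GRing.comm q r -> is_nilpotent q -> is_nilpotent (q * r).
Proof. by move=> cqr [n qn0]; exists n; rewrite exprMn_comm // qn0 mul0r. Qed.

Lemma nilpotentN q : is_nilpotent q -> is_nilpotent (- q).
Proof.
by rewrite -mulrN1; apply: nilpotentMr_comm; apply/commrN/commr1.
Qed.

Lemma nilpotentD_comm q r : GRing.comm q r ->
  is_nilpotent q -> is_nilpotent r -> is_nilpotent (q + r).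
Proof.
move=> cqr [n qn0] [m rm0]; exists (n + m)%N; rewrite exprDn_comm //.
apply: big1 => i _; have [le_n | lt_n] := leqP n (n + m - i)%N.
  by rewrite (expr_eq0_le qn0 le_n) mul0r mul0rn.
rewrite (expr_eq0_le rm0 (_ : m <= i)%N) ?mulr0 ?mul0rn //.
by move: lt_n (ltn_ord i); lia.
Qed.

Lemma nilpotent_sqr q : is_nilpotent (q * q) -> is_nilpotent q.
Proof. by move=> [n qn0]; exists (2 * n)%N; rewrite exprM expr2. Qed.

Lemma snc_defect_nilpotent b :
  is_strongly_nil_clean b -> is_nilpotent (b - b * b).
Proof.
move=> [e [q [idem_e nil_q ceq ->]]].
have -> : e + q - (e + q) * (e + q) = q * (1 - e *+ 2 - q).
  rewrite !mulrDl !mulrDr idem_e -ceq mulr1 !mulrN mulrnAr -ceq mulr2n.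
  by rewrite !opprD !addrA [e + q]addrC addrK.
apply: nilpotentMr_comm => //.
by apply/commrB/commr_refl/commrB/commrMn; [exact: commr1 | exact/esym/ceq].
Qed.

Lemma subr_exprS a n : a - a ^+ n.+1 = (a - a * a) * \sum_(i < n) a ^+ i.
Proof.
rewrite exprS -{1}(mulr1 a) -mulrBr -opprB subrX1 -mulNr opprB mulrA.
by rewrite mulrBr mulr1.
Qed.

Lemma defect_exprS a n :
  a ^+ n.+1 - a ^+ n.+1 * a ^+ n.+1
  = (a - a * a) * (a ^+ n * \sum_(i < n.+1) a ^+ i).
Proof.
rewrite -{1}(mulr1 (a ^+ n.+1)) -mulrBr -opprB subrX1 -mulNr opprB.
rewrite exprS -mulrA [a ^+ n * ((1 - a) * _)]mulrA.
rewrite -(commrX n (commr_sym (commrB (commr1 a) (commr_refl a)))).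
by rewrite -[(1 - a) * _ * _]mulrA [a * ((1 - a) * _)]mulrA mulrBr mulr1.
Qed.

Lemma sqr_defect_sqr a : a * a - (a * a) * (a * a) =
  (a - a * a) * (a - a * a) + (a - a * a) * 2 * (a * a).
Proof.
set y := a - a * a.
have -> : a * a - (a * a) * (a * a) = y * (a + a * a).
  by rewrite /y mulrBl !mulrDr [a * (a * a)]mulrA opprD addrA addrK.
by rewrite -mulrA -mulrDr mulr_natl mulr2n /y addrA subrK.
Qed.

Lemma defect_sqr_nilpotent a : is_nilpotent (2 : R) ->
  is_nilpotent (a * a - (a * a) * (a * a)) -> is_nilpotent (a - a * a).
Proof.
move=> nil2 nil_sqr; apply: nilpotent_sqr; set y := a - a * a.
have -> : y * y = (a * a - (a * a) * (a * a)) + - (2 * (y * (a * a))).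
  by rewrite sqr_defect_sqr [2 * _]mulrA -(commr_nat y 2) addrK.
apply: nilpotentD_comm => //; first by rewrite /y; commr_poly.
by apply/nilpotentN/nilpotentMr_comm => //; apply: commr_sym; apply: commr_nat.
Qed.

Lemma defect_expr2_nilpotent a k : is_nilpotent (2 : R) ->
  is_nilpotent (a ^+ (2 ^ k) - a ^+ (2 ^ k) * a ^+ (2 ^ k)) ->
  is_nilpotent (a - a * a).
Proof.
move=> nil2; elim: k => [|k IH]; first by rewrite expn0 expr1.
have sqr_k : a ^+ (2 ^ k) * a ^+ (2 ^ k) = a ^+ (2 ^ k.+1).
  by rewrite -exprD addnn -mul2n -expnS.
by move=> nil_k1; apply/IH/(defect_sqr_nilpotent nil2); rewrite sqr_k.
Qed.

End Nilpotent.

Section IdealPower.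
Variables (R : unitRingType) (x t : R).
Hypothesis t_central : forall r, GRing.comm r t.

(* [xt_power n y] says that y lies in the n-th power of the ideal generated
   by x and t inside the commutant of x. *)
Definition xt_power n y := exists c : nat -> R,
  (forall i, GRing.comm (c i) x) /\
  y = \sum_(i < n.+1) x ^+ i * t ^+ (n - i) * c i.

Lemma xt_power0 y : GRing.comm y x -> xt_power 0 y.
Proof.
by move=> cyx; exists (fun=> y); split=> //; rewrite big_ord1 !expr0 !mul1r.
Qed.

Lemma xt_powerD n y z : xt_power n y -> xt_power n z -> xt_power n (y + z).
Proof.
move=> [c [cx ->]] [d [dx ->]]; exists (fun i => c i + d i); split.
  by move=> i; apply/commr_sym/commrD; apply: commr_sym.
by rewrite -big_split; apply: eq_bigr => i _; rewrite mulrDr.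
Qed.

Lemma xt_powerMx n y w :
  xt_power n y -> GRing.comm w x -> xt_power n.+1 (y * x * w).
Proof.
move=> [c [cx ->]] wx; exists (fun i => if i is i'.+1 then c i' * w else 0).
split=> [[|i] |]; first exact/commr_sym/commr0.
  by apply: commr_sym; apply: commrM; apply: commr_sym.
rewrite [RHS]big_ord_recl /= mulr0 add0r !mulr_suml; apply: eq_bigr => i _.
rewrite /bump /= add1n subSS exprSr -!mulrA; congr (_ * _).
rewrite [c i * (x * w)]mulrA (cx i) -mulrA [_ ^+ _ * (x * _)]mulrA.
by rewrite -(commrX (n - i) (t_central x)) -!mulrA.
Qed.

Lemma xt_powerMt n y w :
  xt_power n y -> GRing.comm w x -> xt_power n.+1 (y * t * w).
Proof.
move=> [c [cx ->]] wx; exists (fun i => if (i < n.+1)%N then c i * w else 0).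
split=> [i |].
  case: ifP => _; last exact/commr_sym/commr0.
  by apply: commr_sym; apply: commrM; apply: commr_sym.
rewrite [RHS]big_ord_recr /= ltnn mulr0 addr0 !mulr_suml; apply: eq_bigr => i _.
rewrite ltn_ord subSn -1?ltnS // exprSr -!mulrA; do 2 congr (_ * _).
by rewrite mulrA t_central -mulrA.
Qed.

Lemma xt_power_eq0 N y :
  x ^+ N = 0 -> t ^+ N = 0 -> xt_power (N + N) y -> y = 0.
Proof.
move=> xN0 tN0 [c [_ ->]]; apply: big1 => i _.
have [le_Ni | lt_iN] := leqP N i; first by rewrite (expr_eq0_le xN0 le_Ni) !mul0r.
by rewrite (expr_eq0_le tN0 (_ : N <= N + N - i)%N) ?mulr0 ?mul0r //; lia.
Qed.

End IdealPower.

Lemma snc_of_defect_nilpotent (R : unitRingType) (a : R) :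
  is_nilpotent (2 : R) -> is_nilpotent (a - a * a) -> is_strongly_nil_clean a.
Proof.
move=> [n2 n2_0] [n1 n1_0]; set x := a - a * a; pose N := (n1 + n2)%N.
have xN0 : x ^+ N = 0 by apply: expr_eq0_le n1_0 _; rewrite leq_addr.
have tN0 : (2 : R) ^+ N = 0 by apply: expr_eq0_le n2_0 _; rewrite leq_addl.
pose c m := a ^+ (2 ^ m).
have c_sqr m : c m * c m = c m.+1 by rewrite /c -exprD expnS mul2n addnn.
have c_defect m :
    c m - c m * c m = x * (a ^+ (2 ^ m).-1 * \sum_(i < (2 ^ m).-1.+1) a ^+ i).
  by rewrite /c -{1 2 3}(prednK (expn_gt0 2 m)) defect_exprS.
have two_central (r : R) : GRing.comm r 2 := commr_nat r 2.
have c_power m : xt_power x 2 m (c m - c m * c m).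
  elim: m => [|m IH]; first by apply: xt_power0; rewrite /x /c; commr_poly.
  rewrite -c_sqr sqr_defect_sqr {2}c_defect mulrA.
  apply: xt_powerD.
    by apply: (xt_powerMx two_central IH); rewrite /x; commr_poly.
  by apply: (xt_powerMt two_central IH); rewrite /x /c; commr_poly.
have c_idem : c (N + N)%N * c (N + N)%N = c (N + N)%N.
  apply/esym/eqP; rewrite -subr_eq0; apply/eqP.
  exact: xt_power_eq0 xN0 tN0 (c_power _).
exists (c (N + N)%N), (a - c (N + N)%N); split=> //; last by rewrite addrC subrK.
- rewrite /c -(prednK (expn_gt0 2 (N + N))) subr_exprS.
  by apply: nilpotentMr_comm; [rewrite /x; commr_poly | exists N].
- by rewrite /c; commr_poly.
Qed.

Theorem mainTheorem10 (R : unitRingType) :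
  CSNC R <->
  (is_nilpotent (2 : R) /\
   forall a : R, is_clean a ->
     exists k : nat, is_strongly_nil_clean (a ^+ (2 ^ k)%N)).
Proof.
split.
- move=> csnc; split=> [|a /csnc snc_a]; last by exists 0%N; rewrite expn0 expr1.
  have clean_N1 : is_clean (-1 : R).
    by exists 0, (-1); split; [exact: mul0r | exact: unitrN1 | rewrite add0r].
  have := snc_defect_nilpotent (csnc _ clean_N1).
  by rewrite mulrNN mulr1 -opprD => /nilpotentN; rewrite opprK.
- move=> [nil2 snc_pow] a /snc_pow [k snc_k].
  apply: (snc_of_defect_nilpotent nil2).
  exact: defect_expr2_nilpotent nil2 (snc_defect_nilpotent snc_k).
Qed.
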